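(* Let $\mathbf v\in\omega^{<\omega}$ and let $O\subsetneq\mathbf S_{\mathbf v}$ be open in the Baire space and $\pi$-dense at $\mathbf v$. Then there is a foliage tree $\mathbf G$ such that: (a1) $0_{\mathbf G}=\mathbf v$; (a2) $\mathrm{height}\,\mathbf G\le\omega$; (a3) $\mathbf G$ is $\aleph_0$-branching; (a4) $\mathbf G$ has bounded chains; (a5) $\mathbf G$ is locally strict; (a6) $\mathbf G$ is open in the Baire space; (a7) $\mathbf G$ is a foliage graft for $\mathbf S$; (a8) $\mathbf G$ preserves shoots of $\mathbf S$; (a9) $\mathrm{impl}\,\mathbf G\ne\emptyset$; (a10) $\mathrm{cut}(\mathbf S,\mathbf G)=\mathbf S_{\mathbf v}\setminus O$; (a11) $O$ is the union of the pairwise disjoint family $(\mathbf S_z)_{z\in\max\mathbf G}$.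
   Context: Trees: a tree is a pair $(Q,<)$ with $<$ irreflexive transitive and predecessor sets well-ordered; $\mathrm{sons}(x)$ = immediate successors; $\max$ = maximal nodes; $0$ = least node; bounded chains: every nonempty chain has an upper-bound node; $\aleph_0$-branching: every non-maximal node has exactly $\aleph_0$ sons; height of a tree = least ordinal $\beta$ such that no node has predecessor set of order type $\beta$; $A{\downarrow}=\{v:\exists a\in A\ a\le v\}$. A graft for a tree $\mathcal T$ is a tree $\mathcal G$ with more than one node, least node $0_{\mathcal G}\in\mathrm{nodes}\,\mathcal T$, $\max\mathcal G\subseteq\{v\in\mathrm{nodes}\,\mathcal T:v>_{\mathcal T}0_{\mathcal G}\}$ an antichain in $\mathcal T$, and $\mathrm{impl}\,\mathcal G:=\mathrm{nodes}\,\mathcal G\setminus(\{0_{\mathcal G}\}\cup\max\mathcal G)$ disjoint from $\mathrm{nodes}\,\mathcal T$; $\mathrm{expl}(\mathcal T,\mathcal G)=\{v:v>_{\mathcal T}0_{\mathcal G}\}\setminus(\max\mathcal G){\downarrow}_{\mathcal T}$. Foliage trees: $\mathbf F=(\mathcal T,l)$, leaves $\mathbf F_x=l(x)$; tree notions refer to the skeleton $\mathcal T$; nonincreasing: $x\le y\Rightarrow\mathbf F_y\subseteq\mathbf F_x$; locally strict: each non-maximal $\mathbf F_x$ is the union of the pairwise disjoint family $(\mathbf F_s)_{s\in\mathrm{sons}(x)}$; open in a space: all leaves open; $\mathrm{flesh}\,\mathbf F=\bigcup_x\mathbf F_x$; $\mathrm{shoot}_{\mathbf F}(z)=\{\bigcup_{s\in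 C}\mathbf F_s:C$ cofinite subset of $\mathrm{sons}(z)\}$; $\mathrm{scope}_{\mathbf F}(p)=\{y:p\in\mathbf F_y\}$; $\gamma\gg\delta$ means every nonempty $D\in\delta$ contains some nonempty $G\in\gamma$. The standard foliage tree $\mathbf S$ has skeleton $(\omega^{<\omega},\subsetneq)$ and leaves $\mathbf S_x=\{p\in\omega^\omega:x\subseteq p\}$; the Baire space is $\omega^\omega$ with the product topology ($\omega$ discrete). $A\subseteq\omega^\omega$ is $\pi$-dense at $x\in\omega^{<\omega}$ iff for every $y\in\omega^{<\omega}$ with $y\supseteq x$ the set $\{n\in\omega:\mathbf S_{y^\frown\langle n\rangle}\subseteq A\}$ is infinite. A foliage graft for a nonincreasing foliage tree $\mathbf F$ is a nonincreasing foliage tree $\mathbf G$ whose skeleton is a graft for the skeleton of $\mathbf F$, with $\mathbf G_{0_{\mathbf G}}\subseteq\mathbf F_{0_{\mathbf G}}$ and $\mathbf G_m=\mathbf F_m$ for all $m\in\max\mathbf G$; $\mathrm{cut}(\mathbf F,\mathbf G)=\mathbf F_{0_{\mathbf G}}\setminus\mathbf G_{0_{\mathbf G}}$. $\mathbf G$ preserves shoots of $\mathbf F$ iff for each $p\in\mathrm{flesh}\,\mathbf G$ and each $y\in\mathrm{scope}_{\mathbf F}(p)\cap(\{0_{\mathbf G}\}\cup\mathrm{expl}(\mathbf F,\mathbf G))$ there is $x\in\mathrm{scope}_{\mathbf G}(p)\cap(\{0_{\mathbf G}\}\cup\mathrm{impl}\,\mathbf G)$ with $\mathrm{shoot}_{\mathbf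 G}(x)\gg\mathrm{shoot}_{\mathbf F}(y)$ (implant and explant refer to skeletons). *)

From Stdlib Require Import List Arith.
Import ListNotations.

Definition Baire := nat -> nat.
Definition pset := Baire -> Prop.

Record tree (N : Type) := Tree { nodes : N -> Prop; tlt : N -> N -> Prop }.
Arguments Tree {N}.
Arguments nodes {N}.
Arguments tlt {N}.

Definition tle {N} (T : tree N) (x y : N) : Prop := x = y \/ tlt T x y.

Definition well_ordered {N} (A : N -> Prop) (R : N -> N -> Prop) : Prop :=
  (forall a b, A a -> A b -> a = b \/ R a b \/ R b a) /\
  (forall B : N -> Prop, (exists b, B b) -> (forall b, B b -> A b) ->
     exists m, B m /\ forall b, B b -> m = b \/ R m b).

Definition is_tree {N} (T : tree N) : Prop :=
  (forall x y, tlt T x y -> nodes T x /\ nodes T y) /\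
  (forall x, ~ tlt T x x) /\
  (forall x y z, tlt T x y -> tlt T y z -> tlt T x z) /\
  (forall x, nodes T x -> well_ordered (fun y => tlt T y x) (tlt T)).

Definition sons {N} (T : tree N) (x y : N) : Prop :=
  tlt T x y /\ ~ (exists z, tlt T x z /\ tlt T z y).

Definition is_max {N} (T : tree N) (x : N) : Prop :=
  nodes T x /\ ~ (exists y, tlt T x y).

Definition is_root {N} (T : tree N) (r : N) : Prop :=
  nodes T r /\ forall y, nodes T y -> y <> r -> tlt T r y.

Definition order_type_nat {N} (A : N -> Prop) (R : N -> N -> Prop) (n : nat) : Prop :=
  exists f : nat -> N,
    (forall i, i < n -> A (f i)) /\
    (forall a, A a -> exists i, i < n /\ f i = a) /\
    (forall i j, i < n -> j < n -> (i < j <-> R (f i) (f j))).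

Definition order_type_omega {N} (A : N -> Prop) (R : N -> N -> Prop) : Prop :=
  exists f : nat -> N,
    (forall i, A (f i)) /\
    (forall a, A a -> exists i, f i = a) /\
    (forall i j, i < j <-> R (f i) (f j)).

(* Ordinals <= omega are encoded as option nat (None = omega). *)
Definition order_type {N} (A : N -> Prop) (R : N -> N -> Prop) (b : option nat) : Prop :=
  match b with
  | Some n => order_type_nat A R n
  | None => order_type_omega A R
  end.

(* height T <= omega  iff  some ordinal beta <= omega is not the order type of
   the predecessor set of any node (height = least such beta). *)
Definition height_le_omega {N} (T : tree N) : Prop :=
  exists b : option nat, forall x, nodes T x ->
    ~ order_type (fun y => tlt T y x) (tlt T) b.

Definition aleph0_branching {N} (T : tree N) : Prop :=
  forall x, nodes T x -> ~ is_max T x ->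
    exists f : nat -> N, (forall i j, f i = f j -> i = j) /\
      (forall y, sons T x y <-> exists i, f i = y).

Definition bounded_chains {N} (T : tree N) : Prop :=
  forall C : N -> Prop, (exists c, C c) -> (forall c, C c -> nodes T c) ->
    (forall a b, C a -> C b -> a = b \/ tlt T a b \/ tlt T b a) ->
    exists u, nodes T u /\ forall c, C c -> tle T c u.

Definition impl {N} (G : tree N) (r : N) (x : N) : Prop :=
  nodes G x /\ x <> r /\ ~ is_max G x.

Definition expl {N} (T G : tree N) (r : N) (v : N) : Prop :=
  tlt T r v /\ ~ (exists a, is_max G a /\ tle T a v).

Definition is_graft {N} (T G : tree N) (r : N) : Prop :=
  is_tree T /\ is_tree G /\
  (exists x y, nodes G x /\ nodes G y /\ x <> y) /\
  is_root G r /\ nodes T r /\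
  (forall m, is_max G m -> nodes T m /\ tlt T r m) /\
  (forall m m', is_max G m -> is_max G m' -> m <> m' -> ~ tlt T m m') /\
  (forall x, impl G r x -> ~ nodes T x).

Record ftree (N : Type) := FTree { skel : tree N; leaf : N -> pset }.
Arguments FTree {N}.
Arguments skel {N}.
Arguments leaf {N}.

Definition nonincreasing {N} (F : ftree N) : Prop :=
  forall x y, nodes (skel F) x -> nodes (skel F) y -> tle (skel F) x y ->
    forall p, leaf F y p -> leaf F x p.

Definition locally_strict {N} (F : ftree N) : Prop :=
  forall x, nodes (skel F) x -> ~ is_max (skel F) x ->
    (forall p, leaf F x p <-> exists s, sons (skel F) x s /\ leaf F s p) /\
    (forall s s', sons (skel F) x s -> sons (skel F) x s' -> s <> s' ->
       forall p, leaf F s p -> leaf F s' p -> False).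

Definition open_set (U : pset) : Prop :=
  forall p, U p -> exists n, forall q, (forall i, i < n -> q i = p i) -> U q.

Definition open_ftree {N} (F : ftree N) : Prop :=
  forall x, nodes (skel F) x -> open_set (leaf F x).

Definition flesh {N} (F : ftree N) (p : Baire) : Prop :=
  exists x, nodes (skel F) x /\ leaf F x p.

Definition finite_set {N} (A : N -> Prop) : Prop :=
  exists l : list N, forall a, A a -> In a l.

Definition shoot {N} (F : ftree N) (z : N) (D : pset) : Prop :=
  exists C : N -> Prop, (forall s, C s -> sons (skel F) z s) /\
    finite_set (fun s => sons (skel F) z s /\ ~ C s) /\
    (forall p, D p <-> exists s, C s /\ leaf F s p).

Definition scope {N} (F : ftree N) (p : Baire) (y : N) : Prop :=
  nodes (skel F) y /\ leaf F y p.

Definition refines (gamma delta : pset -> Prop) : Prop :=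
  forall D, delta D -> (exists p, D p) ->
    exists E, gamma E /\ (exists p, E p) /\ forall p, E p -> D p.

Definition foliage_graft {N} (F G : ftree N) (r : N) : Prop :=
  nonincreasing F /\ nonincreasing G /\ is_graft (skel F) (skel G) r /\
  (forall p, leaf G r p -> leaf F r p) /\
  (forall m, is_max (skel G) m -> forall p, leaf G m p <-> leaf F m p).

Definition preserves_shoots {N} (F G : ftree N) (r : N) : Prop :=
  forall p, flesh G p -> forall y, scope F p y ->
    (y = r \/ expl (skel F) (skel G) r y) ->
    exists x, scope G p x /\ (x = r \/ impl (skel G) r x) /\
      refines (shoot G x) (shoot F y).

(* The standard foliage tree S, with nodes omega^{<omega} embedded as inl into
   the node type (list nat + I); inr nodes are not nodes of S. *)
Definition strict_prefix (x y : list nat) : Prop := exists z, z <> [] /\ y = x ++ z.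

Definition Sleaf (x : list nat) (p : Baire) : Prop :=
  forall i, i < length x -> p i = nth i x 0.

Definition S_tree (I : Type) : tree (list nat + I) :=
  Tree (fun n => match n with inl _ => True | inr _ => False end)
       (fun a b => match a, b with
                   | inl x, inl y => strict_prefix x y
                   | _, _ => False end).

Definition S_ftree (I : Type) : ftree (list nat + I) :=
  FTree (S_tree I) (fun n => match n with inl x => Sleaf x | inr _ => fun _ => False end).

Definition pi_dense (A : pset) (x : list nat) : Prop :=
  forall y, (exists z, y = x ++ z) ->
    forall m, exists n, m <= n /\ forall p, Sleaf (y ++ [n]) p -> A p.

From Stdlib Require Import List Arith Lia Classical ClassicalEpsilon Cantor.
Import ListNotations.

(* Let Y ("stems") be the nodes y above v none of whose prefixes above v has its
   cone inside O, and M the one-step extensions y ++ [n], y in Y, whose cone lies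
   inside O.  Since O is open, the cones of M partition O, and M is an antichain.
   The graft G has root v, the members of M as maximal nodes, and as implants
   countably many copies (y, h), h >= |y|, of the stem tree cut at height h; a
   leaf y ++ [n] of M hangs below the copies of its prefixes at the single level
   [level y n].  By pi-density each stem has infinitely many one-step extensions
   with cone inside O, and [level] spreads them over all levels, infinitely many
   at each.  This makes every implant aleph_0-branching and lets the shoot of the
   copy (y, h) refine the shoot of y in S.  Node ranks are finite, whence
   height <= omega and bounded chains. *)

Ltac split_ands := repeat match goal with |- _ /\ _ => split end.

(** * Prefixes and truncations *)

Definition prefix (a b : list nat) : Prop := exists w, b = a ++ w.
Definition trunc (p : Baire) (k : nat) : list nat := map p (seq 0 k).
Definition zero_ext (c : list nat) : Baire := fun i => nth i c 0.

Lemma trunc_length p k : length (trunc p k) = k.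
Proof. unfold trunc. rewrite length_map, length_seq. reflexivity. Qed.

Lemma nth_trunc p k i : i < k -> nth i (trunc p k) 0 = p i.
Proof.
  intro H. unfold trunc.
  rewrite nth_indep with (d' := p 0) by (rewrite length_map, length_seq; lia).
  rewrite map_nth, seq_nth by lia. reflexivity.
Qed.

Lemma Sleaf_trunc_iff a p : Sleaf a p <-> a = trunc p (length a).
Proof.
  split.
  - intro H. apply nth_ext with (d := 0) (d' := 0); rewrite ?trunc_length; auto.
    intros i Hi. rewrite nth_trunc by lia. symmetry; apply H; auto.
  - intros H i Hi. rewrite H, nth_trunc; auto.
Qed.

Lemma Sleaf_trunc q k : Sleaf (trunc q k) q.
Proof. apply Sleaf_trunc_iff. rewrite trunc_length. reflexivity. Qed.

Lemma Sleaf_zero_ext c : Sleaf c (zero_ext c).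
Proof. intros i Hi. reflexivity. Qed.

Lemma trunc_add p k j : trunc p (k + j) = trunc p k ++ map p (seq k j).
Proof. unfold trunc. rewrite seq_app, map_app. reflexivity. Qed.

Lemma trunc_S p k : trunc p (S k) = trunc p k ++ [p k].
Proof. replace (S k) with (k + 1) by lia. rewrite trunc_add. reflexivity. Qed.

Lemma prefix_trunc q j k : j <= k -> prefix (trunc q j) (trunc q k).
Proof.
  intro H. exists (map q (seq j (k - j))).
  replace k with (j + (k - j)) at 1 by lia. apply trunc_add.
Qed.

Lemma prefix_refl a : prefix a a.
Proof. exists []. rewrite app_nil_r. reflexivity. Qed.

Lemma prefix_snoc_r a n : prefix a (a ++ [n]).
Proof. exists [n]. reflexivity. Qed.

Lemma prefix_trans a b c : prefix a b -> prefix b c -> prefix a c.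
Proof. intros [w1 ->] [w2 ->]. exists (w1 ++ w2). rewrite app_assoc. reflexivity. Qed.

Lemma prefix_length a b : prefix a b -> length a <= length b.
Proof. intros [w ->]. rewrite length_app. lia. Qed.

Lemma prefix_length_eq a b : prefix a b -> length b <= length a -> a = b.
Proof.
  intros [w ->] H. rewrite length_app in H.
  destruct w; [rewrite app_nil_r; auto | simpl in H; lia].
Qed.

Lemma prefix_antisym a b : prefix a b -> prefix b a -> a = b.
Proof. intros H1 H2. apply prefix_length_eq, prefix_length; auto. Qed.

Lemma prefix_strict_length a b : prefix a b -> a <> b -> length a < length b.
Proof.
  intros H1 H2. destruct (le_lt_dec (length b) (length a)); auto.
  exfalso. apply H2, prefix_length_eq; auto.
Qed.

Lemma snoc_neq (a : list nat) n : a <> a ++ [n].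
Proof. intro E. apply (f_equal (@length nat)) in E. rewrite length_app in E. simpl in E. lia. Qed.

Lemma prefix_Sleaf a b p : prefix a b -> Sleaf b p -> Sleaf a p.
Proof.
  intros [w ->] H i Hi. rewrite H by (rewrite length_app; lia). apply app_nth1; auto.
Qed.

Lemma Sleaf_comparable a b p : Sleaf a p -> Sleaf b p -> prefix a b \/ prefix b a.
Proof.
  intros Ha Hb. apply Sleaf_trunc_iff in Ha. apply Sleaf_trunc_iff in Hb.
  rewrite Ha, Hb. destruct (le_lt_dec (length a) (length b)).
  - left. apply prefix_trunc; auto.
  - right. apply prefix_trunc; lia.
Qed.

Lemma prefix_comparable a b c : prefix a c -> prefix b c -> prefix a b \/ prefix b a.
Proof.
  intros H1 H2. apply Sleaf_comparable with (p := zero_ext c);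
    eapply prefix_Sleaf; eauto; apply Sleaf_zero_ext.
Qed.

Lemma Sleaf_snoc_last y n p : Sleaf (y ++ [n]) p -> p (length y) = n.
Proof. intro H. rewrite H by (rewrite length_app; simpl; lia). apply nth_middle. Qed.

Lemma prefix_snoc a b n : prefix a (b ++ [n]) -> prefix a b \/ a = b ++ [n].
Proof.
  intro H. destruct (le_lt_dec (length a) (length b)).
  - left. destruct (prefix_comparable a b (b ++ [n]) H (prefix_snoc_r b n)) as [H1|H1]; auto.
    apply prefix_length_eq in H1; auto. subst. apply prefix_refl.
  - right. apply prefix_length_eq; auto. rewrite length_app; simpl; lia.
Qed.

Lemma prefix_strict_snoc a b : prefix a b -> a <> b -> exists n w, b = (a ++ [n]) ++ w.
Proof.
  intros [w ->] H. destruct w as [|n w]; [rewrite app_nil_r in H; congruence|].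
  exists n, w. rewrite <- app_assoc. reflexivity.
Qed.

Lemma strict_prefix_iff x y : strict_prefix x y <-> prefix x y /\ x <> y.
Proof.
  split.
  - intros [z [Hz ->]]. split; [exists z; auto|]. intro H.
    apply (f_equal (@length nat)) in H. rewrite length_app in H.
    destruct z; simpl in *; [congruence|lia].
  - intros [[w ->] H]. exists w. split; auto. intros ->. rewrite app_nil_r in H; auto.
Qed.

(** * Finite ranks and enumerations *)

Lemma nat_least (P : nat -> Prop) :
  (exists n, P n) -> exists n, P n /\ forall m, P m -> n <= m.
Proof.
  intros [n Hn]. revert Hn. induction n as [n IH] using lt_wf_ind. intro Hn.
  destruct (classic (exists m, m < n /\ P m)) as [[m [Hm Pm]]|Hno].
  - apply (IH m Hm Pm).
  - exists n. split; auto. intros m Pm.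
    destruct (le_lt_dec n m); auto. exfalso; eauto.
Qed.

Lemma In_le_list_sum {A} (f : A -> nat) x l : In x l -> f x <= list_sum (map f l).
Proof.
  induction l as [|a l IH]; simpl; intro H; [contradiction|].
  destruct H as [->|H]; [lia|]. specialize (IH H). lia.
Qed.

Section Rank.
Variables (N : Type) (R : N -> N -> Prop) (rk : N -> nat).
Hypothesis rank_lt : forall a b, R a b -> rk a < rk b.

Lemma well_ordered_of_rank (A : N -> Prop) :
  (forall a b, A a -> A b -> a = b \/ R a b \/ R b a) -> well_ordered A R.
Proof.
  intro Hlin. split; auto. intros B [b0 Hb0] HBA.
  destruct (nat_least (fun k => exists b, B b /\ rk b = k)) as [k [[m [Hm Hmk]] Hmin]]; eauto.
  exists m. split; auto. intros b Hb.
  destruct (Hlin m b (HBA m Hm) (HBA b Hb)) as [H|[H|H]]; auto.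
  apply rank_lt in H. assert (k <= rk b) by (apply Hmin; eauto). lia.
Qed.

Lemma not_order_type_omega_of_rank x : ~ order_type_omega (fun y => R y x) R.
Proof.
  intros [f [H1 [_ H3]]].
  assert (Hf : forall i, i <= rk (f i)).
  { induction i; [lia|]. assert (R (f i) (f (S i))) by (apply H3; lia).
    apply rank_lt in H. lia. }
  specialize (Hf (rk x)). specialize (rank_lt _ _ (H1 (rk x))). lia.
Qed.

Lemma chain_max_of_rank (C : N -> Prop) B :
  (exists c, C c) -> (forall c, C c -> rk c <= B) ->
  (forall a b, C a -> C b -> a = b \/ R a b \/ R b a) ->
  exists u, C u /\ forall c, C c -> c = u \/ R c u.
Proof.
  intros [c0 Hc0] HB Hch.
  destruct (nat_least (fun k => forall c, C c -> rk c <= k)) as [k [Hk Hmin]]; eauto.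
  assert (exists u, C u /\ rk u = k) as [u [Hu Huk]].
  { destruct k as [|k']; [exists c0; specialize (Hk c0 Hc0); split; auto; lia|].
    destruct (classic (exists u, C u /\ k' < rk u)) as [[u [Hu Hl]]|Hno].
    - exists u. specialize (Hk u Hu). split; auto. lia.
    - assert (S k' <= k'); [|lia]. apply Hmin. intros c Hc.
      destruct (le_lt_dec (rk c) k'); auto. exfalso; eauto. }
  exists u. split; auto. intros c Hc. destruct (Hch c u Hc Hu) as [H|[H|H]]; auto.
  apply rank_lt in H. specialize (Hk c Hc). lia.
Qed.

End Rank.

Definition least_from (P : nat -> Prop) (m : nat) : nat :=
  epsilon (inhabits 0) (fun n => m <= n /\ P n /\ forall k, m <= k -> P k -> n <= k).

Fixpoint nat_enum (P : nat -> Prop) (i : nat) : nat :=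
  match i with 0 => least_from P 0 | S i => least_from P (S (nat_enum P i)) end.

Section NatEnum.
Variable P : nat -> Prop.
Hypothesis P_infinite : forall m, exists n, m <= n /\ P n.

Lemma least_from_spec m :
  m <= least_from P m /\ P (least_from P m) /\ forall k, m <= k -> P k -> least_from P m <= k.
Proof.
  unfold least_from. apply epsilon_spec.
  destruct (nat_least _ (P_infinite m)) as [n [[N1 N2] N3]]. exists n. auto.
Qed.

Lemma nat_enum_in i : P (nat_enum P i).
Proof. destruct i; apply least_from_spec. Qed.

Lemma nat_enum_increasing i j : i < j -> nat_enum P i < nat_enum P j.
Proof.
  assert (Hs : forall i, nat_enum P i < nat_enum P (S i))
    by (intro k; simpl; destruct (least_from_spec (S (nat_enum P k))); lia).
  induction 1; [apply Hs|]. specialize (Hs m). lia.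
Qed.

Lemma nat_enum_inj i j : nat_enum P i = nat_enum P j -> i = j.
Proof.
  intro H. destruct (lt_eq_lt_dec i j) as [[H1|H1]|H1]; auto;
    apply nat_enum_increasing in H1; lia.
Qed.

Lemma nat_enum_ge i : i <= nat_enum P i.
Proof.
  induction i; [lia|]. pose proof (nat_enum_increasing i (S i) (Nat.lt_succ_diag_r i)). lia.
Qed.

Lemma nat_enum_onto n : P n -> exists i, nat_enum P i = n.
Proof.
  intro Hn. destruct (nat_least (fun j => n <= nat_enum P j)) as [j [Hj Hjmin]];
    [exists n; apply nat_enum_ge|].
  exists j. destruct j as [|i]; simpl in *.
  - destruct (least_from_spec 0) as [_ [_ H3]]. specialize (H3 n (Nat.le_0_l n) Hn). lia.
  - assert (nat_enum P i < n) by (destruct (le_lt_dec n (nat_enum P i)) as [l|l];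
      [apply Hjmin in l; lia | auto]).
    destruct (least_from_spec (S (nat_enum P i))) as [_ [_ H3]].
    specialize (H3 n ltac:(lia) Hn). lia.
Qed.

End NatEnum.

Definition S_rank {I} (a : list nat + I) : nat := match a with inl x => length x | inr _ => 0 end.

Lemma S_rank_lt I a b : tlt (S_tree I) a b -> S_rank a < S_rank b.
Proof.
  destruct a as [x|]; destruct b as [y|]; simpl; try tauto.
  intro H. apply strict_prefix_iff in H. destruct H. apply prefix_strict_length; auto.
Qed.

Lemma S_is_tree I : is_tree (S_tree I).
Proof.
  split; [|split; [|split]].
  - intros [x|] [y|]; simpl; tauto.
  - intros x H. apply S_rank_lt in H. lia.
  - intros [x|] [y|] [z|]; simpl; try tauto. rewrite !strict_prefix_iff.
    intros [P1 N1] [P2 N2]. split; [eapply prefix_trans; eauto|].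
    intros <-. apply N1, prefix_antisym; auto.
  - intros x _. apply well_ordered_of_rank with (rk := S_rank); [apply S_rank_lt|].
    intros [a|] [b|]; destruct x as [c|]; simpl; try tauto. rewrite !strict_prefix_iff.
    intros [Pa _] [Pb _]. destruct (classic (a = b)) as [->|Hne]; auto.
    destruct (prefix_comparable a b c Pa Pb); right; [left|right]; split; auto.
Qed.

Lemma sons_S_tree I a b : sons (S_tree I) (inl a) b <-> exists n, b = inl (a ++ [n]).
Proof.
  split.
  - intros [H1 H2]. destruct b as [c|]; simpl in H1; [|tauto].
    apply strict_prefix_iff in H1. destruct H1 as [P Ne].
    destruct (prefix_strict_snoc _ _ P Ne) as [n [w ->]].
    exists n. destruct w as [|k w]; [rewrite app_nil_r; auto|].
    exfalso. apply H2. exists (inl (a ++ [n])). simpl. rewrite !strict_prefix_iff.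
    split; split; [apply prefix_snoc_r | apply snoc_neq | exists (k :: w); auto |].
    intro E. apply (f_equal (@length nat)) in E. rewrite !length_app in E. simpl in E. lia.
  - intros [n ->]. split.
    + simpl. apply strict_prefix_iff. split; [apply prefix_snoc_r | apply snoc_neq].
    + intros [[m|] [H1 H2]]; simpl in *; try tauto.
      apply strict_prefix_iff in H1. apply strict_prefix_iff in H2.
      destruct H1 as [P1 N1]. destruct H2 as [P2 N2].
      apply prefix_strict_length in P1; auto. apply prefix_strict_length in P2; auto.
      rewrite length_app in P2; simpl in P2; lia.
Qed.

(** * Stems and minimal cones inside O *)

Section Graft.
Variables (v : list nat) (O : pset).

Definition cone_in (u : list nat) : Prop := forall p, Sleaf u p -> O p.

Definition stem (y : list nat) : Prop :=
  prefix v y /\ forall w, prefix v w -> prefix w y -> ~ cone_in w.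

Definition min_cone (z : list nat) : Prop :=
  exists y n, z = y ++ [n] /\ stem y /\ cone_in z.

Hypothesis root_not_in : ~ cone_in v.

Lemma stem_root : stem v.
Proof.
  split; [apply prefix_refl|]. intros w H1 H2. rewrite (prefix_antisym _ _ H2 H1). auto.
Qed.

Lemma stem_not_in y : stem y -> ~ cone_in y.
Proof. intros [H1 H2]. apply H2; [exact H1 | apply prefix_refl]. Qed.

Lemma stem_length y : stem y -> length v <= length y.
Proof. intros [H _]. apply prefix_length; auto. Qed.

Lemma stem_snoc y n : stem y -> ~ cone_in (y ++ [n]) -> stem (y ++ [n]).
Proof.
  intros [H1 H2] H3. split; [eapply prefix_trans; [exact H1 | apply prefix_snoc_r]|].
  intros w Hw1 Hw2. destruct (prefix_snoc _ _ _ Hw2) as [H| ->]; auto.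
Qed.

Lemma stem_next y y' : stem y -> stem y' -> prefix y y' -> y <> y' ->
  exists m w, y' = (y ++ [m]) ++ w /\ stem (y ++ [m]).
Proof.
  intros Hy [Hy'1 Hy'2] Hp Hne. destruct (prefix_strict_snoc _ _ Hp Hne) as [m [w Ew]].
  exists m, w. split; auto. split.
  - eapply prefix_trans; [apply Hy | apply prefix_snoc_r].
  - intros u Hu1 Hu2. apply Hy'2; auto. eapply prefix_trans; [exact Hu2 | exists w; auto].
Qed.

Lemma stem_snoc_neq_root y n : stem y -> y ++ [n] <> v.
Proof.
  intros Hy E. apply stem_length in Hy. apply (f_equal (@length nat)) in E.
  rewrite length_app in E. simpl in E. lia.
Qed.

Lemma min_cone_length z : min_cone z -> length v < length z.
Proof. intros [y [n [-> [Hy _]]]]. apply stem_length in Hy. rewrite length_app; simpl; lia. Qed.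

Lemma min_cone_neq_root z : min_cone z -> z <> v.
Proof. intros H ->. apply min_cone_length in H. lia. Qed.

Lemma min_cone_prefix z : min_cone z -> prefix v z.
Proof. intros [y [n [-> [[Hy _] _]]]]. eapply prefix_trans; [exact Hy | apply prefix_snoc_r]. Qed.

Lemma min_cone_sub z p : min_cone z -> Sleaf z p -> O p.
Proof. intros [y [n [-> [_ Hs]]]] H. apply Hs; auto. Qed.

Lemma min_cone_not_prefix_stem z y : min_cone z -> stem y -> ~ prefix z y.
Proof.
  intros Hz [Hy1 Hy2] H. apply (Hy2 z); auto; [apply min_cone_prefix; auto|].
  destruct Hz as [y0 [n [_ [_ Hs]]]]. auto.
Qed.

Lemma min_cone_unique z z' p : min_cone z -> min_cone z' -> Sleaf z p -> Sleaf z' p -> z = z'.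
Proof.
  intros Hz Hz' H1 H2.
  assert (Hle : forall a b, min_cone a -> min_cone b -> prefix a b -> a = b).
  { intros a b Ha [yb [nb [-> [Yb _]]]] Hab.
    destruct (prefix_snoc _ _ _ Hab) as [H| ->]; auto.
    exfalso. exact (min_cone_not_prefix_stem a yb Ha Yb H). }
  destruct (Sleaf_comparable _ _ _ H1 H2); [|symmetry]; auto.
Qed.

Lemma min_cone_below u : prefix v u -> cone_in u -> exists z, min_cone z /\ prefix z u.
Proof.
  intros Hvu Hu. set (q := zero_ext u).
  assert (Eu : u = trunc q (length u)) by apply Sleaf_trunc_iff, Sleaf_zero_ext.
  assert (Ev : v = trunc q (length v))
    by (apply Sleaf_trunc_iff; eapply prefix_Sleaf; eauto; apply Sleaf_zero_ext).
  destruct (nat_least (fun k => length v <= k /\ k <= length u /\ cone_in (trunc q k)))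
    as [k [[K1 [K2 K3]] Kmin]].
  { exists (length u). split; [apply prefix_length; auto|]. rewrite <- Eu; auto. }
  destruct (Nat.eq_dec k (length v)) as [E|E].
  { exfalso. apply root_not_in. rewrite Ev, <- E. auto. }
  destruct k as [|k']; [lia|].
  exists (trunc q (S k')). split.
  - exists (trunc q k'), (q k'). split; [apply trunc_S|]. split; auto.
    split; [rewrite Ev; apply prefix_trunc; lia|].
    intros w Hw1 Hw2 Hw.
    assert (Ew : w = trunc q (length w))
      by (apply Sleaf_trunc_iff; eapply prefix_Sleaf; eauto; apply Sleaf_trunc).
    apply prefix_length in Hw2 as Hlen. rewrite trunc_length in Hlen.
    assert (S k' <= length w); [|lia].
    apply Kmin. split; [apply prefix_length; auto|]. split; [lia|]. rewrite <- Ew; auto.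
  - rewrite Eu. apply prefix_trunc; auto.
Qed.

Hypothesis O_sub : forall p, O p -> Sleaf v p.
Hypothesis O_open : open_set O.

Lemma min_cone_cover p : O p -> exists z, min_cone z /\ Sleaf z p.
Proof.
  intro Hp. destruct (O_open p Hp) as [N HN].
  set (u := trunc p (N + length v)).
  destruct (min_cone_below u) as [z [Hz1 Hz2]].
  - rewrite (proj1 (Sleaf_trunc_iff v p) (O_sub p Hp)). apply prefix_trunc. lia.
  - intros q Hq. apply HN. intros i Hi.
    rewrite Hq by (unfold u; rewrite trunc_length; lia). unfold u. apply nth_trunc. lia.
  - exists z. split; auto. eapply prefix_Sleaf; eauto. apply Sleaf_trunc.
Qed.

Hypothesis O_dense : pi_dense O v.

(* The k-th son of y whose cone lies in O (in increasing order) is sent to level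
   |y| + i, where (i, j) is the k-th pair in Cantor's enumeration of nat * nat;
   on the other sons the value is junk and never used. *)
Definition level (y : list nat) (n : nat) : nat :=
  length y + fst (Cantor.of_nat (epsilon (inhabits 0)
    (fun k => nat_enum (fun m => cone_in (y ++ [m])) k = n))).

Lemma level_ge y n : length y <= level y n.
Proof. unfold level. lia. Qed.

Lemma level_onto y h m : prefix v y -> length y <= h ->
  exists n, m <= n /\ cone_in (y ++ [n]) /\ level y n = h.
Proof.
  intros Hy Hh. set (P := fun m => cone_in (y ++ [m])).
  pose proof (O_dense y Hy) as Hinf.
  set (k := Cantor.to_nat (h - length y, m)).
  assert (Hk : m <= k)
    by (pose proof (Cantor.to_nat_non_decreasing (h - length y) m); unfold k; lia).
  exists (nat_enum P k). split; [pose proof (nat_enum_ge P Hinf k); lia|].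
  split; [exact (nat_enum_in P Hinf k)|].
  unfold level. fold P. set (e := epsilon _ _).
  assert (He : nat_enum P e = nat_enum P k) by (unfold e; apply epsilon_spec; eauto).
  apply (nat_enum_inj P Hinf) in He. rewrite He. unfold k. rewrite Cantor.cancel_of_to.
  simpl. lia.
Qed.

(** * The graft *)

(* [inl v] is the root, [inl z] with [min_cone z] the maximal nodes, and
   [inr (y, h)] the copy at level [h] of the stem [y]. *)
Definition node : Type := list nat + (list nat * nat).

Definition Gnode (a : node) : Prop :=
  match a with
  | inl x => x = v \/ min_cone x
  | inr (y, h) => stem y /\ length y <= h
  end.

Definition Glt (a b : node) : Prop :=
  match a, b with
  | inl x, _ => x = v /\ Gnode b /\ b <> inl v
  | inr (y, h), inr (y', h') =>
      h = h' /\ stem y /\ stem y' /\ length y' <= h /\ prefix y y' /\ y <> y'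
  | inr (y, h), inl z => exists y' n, z = y' ++ [n] /\ prefix y y' /\ stem y /\ stem y' /\
                            cone_in z /\ level y' n = h
  end.

Definition implant_leaf (y : list nat) (h : nat) (p : Baire) : Prop :=
  exists y' n, prefix y y' /\ stem y' /\ cone_in (y' ++ [n]) /\ level y' n = h /\
    Sleaf (y' ++ [n]) p.

Definition Gleaf (a : node) : pset :=
  match a with
  | inl x => fun p => (x = v /\ O p) \/ (x <> v /\ Sleaf x p)
  | inr (y, h) => implant_leaf y h
  end.

Definition Gtree : tree node := Tree Gnode Glt.
Definition Gft : ftree node := FTree Gtree Gleaf.

Definition Grank (a : node) : nat :=
  match a with inl x => 2 * length x + 2 | inr (y, _) => 2 * length y + 3 end.

Lemma Grank_lt a b : Glt a b -> Grank a < Grank b.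
Proof.
  destruct a as [x|[y h]]; destruct b as [z|[y' h']]; simpl.
  - intros [-> [[->|Hm] Hne]]; [congruence|]. apply min_cone_length in Hm. lia.
  - intros [-> [[Hy _] _]]. apply stem_length in Hy. lia.
  - intros [y' [n [-> [Hp _]]]]. apply prefix_length in Hp. rewrite length_app; simpl; lia.
  - intros [_ [_ [_ [_ [Hp Hne]]]]]. apply prefix_strict_length in Hp; auto. lia.
Qed.

Lemma Glt_nodes a b : Glt a b -> Gnode a /\ Gnode b.
Proof.
  destruct a as [x|[y h]]; destruct b as [z|[y' h']]; simpl.
  - intros [-> [H _]]. split; [left; reflexivity | exact H].
  - intros [-> [H _]]. split; [left; reflexivity | exact H].
  - intros [y' [n [-> [Hp [Hy [Hy' [Hs Hc]]]]]]]. split.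
    + split; auto. apply prefix_length in Hp. pose proof (level_ge y' n). lia.
    + right. exists y', n. auto.
  - intros [<- [Hy [Hy' [Hl [Hp Hne]]]]]. apply prefix_length in Hp. split; split; auto; lia.
Qed.

Lemma Glt_from_inl x b : Glt (inl x) b -> x = v.
Proof. intros [H _]. exact H. Qed.

Lemma not_Glt_root a : ~ Glt a (inl v).
Proof.
  destruct a as [x|[y h]]; simpl.
  - intros [_ [_ H]]. auto.
  - intros [y' [n [E [_ [_ [Hy' _]]]]]]. exact (stem_snoc_neq_root y' n Hy' (eq_sym E)).
Qed.

Lemma Glt_trans a b c : Glt a b -> Glt b c -> Glt a c.
Proof.
  intros H1 H2. pose proof (Glt_nodes _ _ H2) as [_ Nc].
  destruct a as [x|[y h]].
  - destruct H1 as [-> _]. simpl. split_ands; auto. intros ->. eapply not_Glt_root; eauto.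
  - destruct b as [z|[y' h']].
    + exfalso. destruct H1 as [y' [n [-> [_ [_ [Hy' _]]]]]].
      apply Glt_from_inl in H2. exact (stem_snoc_neq_root y' n Hy' H2).
    + destruct H1 as [<- [Hy [Hy' [Hl [Hp Hne]]]]].
      destruct c as [z|[y'' h'']].
      * destruct H2 as [y3 [n [-> [Hp2 [_ [Hy3 [Hs Hc]]]]]]].
        exists y3, n. split_ands; eauto using prefix_trans.
      * destruct H2 as [<- [_ [Hy'' [Hl' [Hp' Hne']]]]]. simpl.
        split_ands; eauto using prefix_trans.
        intros ->. apply Hne, prefix_antisym; auto.
Qed.

Lemma Glt_linear_below a b x : Glt a x -> Glt b x -> a = b \/ Glt a b \/ Glt b a.
Proof.
  intros Ha Hb. pose proof (Glt_nodes _ _ Ha) as [Na _]. pose proof (Glt_nodes _ _ Hb) as [Nb _].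
  destruct a as [xa|[y1 h1]].
  { apply Glt_from_inl in Ha as ->. destruct b as [xb|[y2 h2]].
    - apply Glt_from_inl in Hb as ->. auto.
    - right. left. simpl. split; [reflexivity | split; [exact Nb | congruence]]. }
  destruct b as [xb|[y2 h2]].
  { apply Glt_from_inl in Hb as ->. right. right. simpl.
    split; [reflexivity | split; [exact Na | congruence]]. }
  assert (E : h1 = h2 /\ (prefix y1 y2 \/ prefix y2 y1) /\ length y1 <= h1 /\ length y2 <= h1).
  { destruct x as [z|[y3 h3]].
    - destruct Ha as [ya [na [-> [Pa [_ [_ [_ Ca]]]]]]].
      destruct Hb as [yb [nb [E [Pb [_ [_ [_ Cb]]]]]]].
      apply app_inj_tail in E. destruct E; subst.
      pose proof (level_ge yb nb). apply prefix_length in Pa as La. apply prefix_length in Pb as Lb.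
      split_ands; [reflexivity | eapply prefix_comparable; eauto | lia | lia].
    - destruct Ha as [-> [_ [_ [L1 [P1 _]]]]]. destruct Hb as [<- [_ [_ [L2 [P2 _]]]]].
      pose proof (prefix_length _ _ P1). pose proof (prefix_length _ _ P2).
      split_ands; [lia | eapply prefix_comparable; eauto | lia | lia]. }
  destruct E as [<- [P [L1 L2]]]. destruct Na as [Y1 _]. destruct Nb as [Y2 _].
  destruct (classic (y1 = y2)) as [<-|Hne]; auto.
  right. destruct P; [left|right]; simpl; split_ands; auto.
Qed.

Lemma G_is_tree : is_tree Gtree.
Proof.
  split; [|split; [|split]]; simpl.
  - apply Glt_nodes.
  - intros x H. apply Grank_lt in H. lia.
  - apply Glt_trans.
  - intros x _. apply well_ordered_of_rank with (rk := Grank); [apply Grank_lt|].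
    intros a b Ha Hb. eapply Glt_linear_below; eauto.
Qed.

Lemma sons_root b : sons Gtree (inl v) b <-> exists h, b = inr (v, h) /\ length v <= h.
Proof.
  pose proof stem_root as Yv. split.
  - intros [[_ [Nb Hne]] H2]. destruct b as [z|[y h]].
    + exfalso. destruct Nb as [->|[y' [n [-> [Hy' Hs]]]]]; [congruence|].
      apply H2. exists (inr (v, level y' n)). split.
      * simpl. split; [reflexivity | split; [split; [exact Yv|] | congruence]].
        pose proof (level_ge y' n). apply stem_length in Hy'. lia.
      * simpl. exists y', n. split_ands; auto. apply Hy'.
    + destruct (classic (y = v)) as [->|Hne']; [exists h; split; auto; apply Nb|].
      exfalso. apply H2. exists (inr (v, h)). destruct Nb as [Hy Hl]. split.
      * simpl. split; [reflexivity | split; [split; [exact Yv|] | congruence]].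
        apply stem_length in Hy; lia.
      * simpl. split_ands; auto. apply Hy.
  - intros [h [-> Hh]]. split.
    + simpl. split; [reflexivity | split; [split; [exact Yv | exact Hh] | congruence]].
    + intros [m [Hm1 Hm2]]. destruct m as [x|[y h']].
      * apply Glt_from_inl in Hm2 as ->. destruct Hm1 as [_ [_ Hne]]. congruence.
      * destruct Hm2 as [_ [Hy [_ [_ [Hp Hne]]]]]. apply Hne, prefix_antisym; auto. apply Hy.
Qed.

Lemma Glt_inr_inl_max y h x b : Glt (inr (y, h)) (inl x) -> ~ Glt (inl x) b.
Proof.
  intros [y' [n [E [_ [_ [Hy' _]]]]]] H2. apply Glt_from_inl in H2. subst x.
  exact (stem_snoc_neq_root y' n Hy' H2).
Qed.

Lemma sons_implant y h b : stem y -> length y <= h ->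
  (sons Gtree (inr (y, h)) b <-> exists n,
     (b = inr (y ++ [n], h) /\ ~ cone_in (y ++ [n]) /\ S (length y) <= h) \/
     (b = inl (y ++ [n]) /\ cone_in (y ++ [n]) /\ level y n = h)).
Proof.
  intros Hy Hh. split.
  - intros [H1 H2]. destruct b as [z|[y' h']].
    + destruct H1 as [y' [n [-> [Hp [_ [Hy' [Hs Hc]]]]]]].
      destruct (classic (y = y')) as [<-|Hne]; [exists n; right; auto|].
      exfalso. destruct (stem_next y y' Hy Hy' Hp Hne) as [m [w [-> Ym]]].
      apply H2. exists (inr (y ++ [m], h)). split.
      * simpl. split_ands; auto; [| apply prefix_snoc_r | apply snoc_neq].
        pose proof (level_ge ((y ++ [m]) ++ w) n). rewrite !length_app in *. lia.
      * simpl. exists ((y ++ [m]) ++ w), n. split_ands; auto. exists w; auto.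
    + destruct H1 as [<- [_ [Hy' [Hl [Hp Hne]]]]].
      destruct (stem_next y y' Hy Hy' Hp Hne) as [m [w [-> Ym]]].
      destruct w as [|k w].
      * rewrite app_nil_r in *. exists m. left. split_ands; auto; [apply stem_not_in; auto|].
        rewrite length_app in Hl; simpl in Hl; lia.
      * exfalso. apply H2. exists (inr (y ++ [m], h)). split.
        -- simpl. split_ands; auto; [| apply prefix_snoc_r | apply snoc_neq].
           rewrite !length_app in *. simpl in *. lia.
        -- simpl. split_ands; auto; [exists (k :: w); auto|].
           intro E. apply (f_equal (@length nat)) in E. rewrite !length_app in E. simpl in E. lia.
  - intros [n [[-> [Hs Hl]]|[-> [Hs Hc]]]].
    + split.
      * simpl. split_ands; auto; [apply stem_snoc; auto | rewrite length_app; simpl; lia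
          | apply prefix_snoc_r | apply snoc_neq].
      * intros [[x|[y'' h'']] [Hm1 Hm2]].
        -- exact (Glt_inr_inl_max _ _ _ _ Hm1 Hm2).
        -- destruct Hm1 as [_ [_ [_ [_ [P1 N1]]]]]. destruct Hm2 as [_ [_ [_ [_ [P2 N2]]]]].
           destruct (prefix_snoc _ _ _ P2) as [P3|P3]; [|contradiction].
           apply N1, prefix_antisym; auto.
    + split.
      * simpl. exists y, n. split_ands; auto. apply prefix_refl.
      * intros [[x|[y'' h'']] [Hm1 Hm2]].
        -- exact (Glt_inr_inl_max _ _ _ _ Hm1 Hm2).
        -- destruct Hm1 as [_ [_ [_ [_ [P1 N1]]]]]. destruct Hm2 as [y3 [n3 [E [P2 _]]]].
           apply app_inj_tail in E. destruct E as [<- <-].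
           apply N1, prefix_antisym; auto.
Qed.

Lemma implant_not_max y h : Gnode (inr (y, h)) -> ~ is_max Gtree (inr (y, h)).
Proof.
  intros [Hy Hh] [_ Hm]. apply Hm.
  destruct (level_onto y h 0 (proj1 Hy) Hh) as [n [_ [Hs Hc]]].
  exists (inl (y ++ [n])). exists y, n. split_ands; auto. apply prefix_refl.
Qed.

Lemma Gmax_iff a : is_max Gtree a <-> exists z, a = inl z /\ min_cone z.
Proof.
  split.
  - intros Hmax. pose proof Hmax as [Na Hm]. destruct a as [x|[y h]].
    + destruct Na as [->|Hx]; eauto. exfalso. apply Hm. exists (inr (v, length v)).
      simpl. split_ands; auto; [apply stem_root | congruence].
    + exfalso. exact (implant_not_max y h Na Hmax).
  - intros [z [-> Hz]]. split; [right; auto|]. intros [b Hb].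
    apply Glt_from_inl in Hb. exact (min_cone_neq_root z Hz Hb).
Qed.

Lemma G_aleph0_branching : aleph0_branching Gtree.
Proof.
  intros a Na Hnm. destruct a as [x|[y h]].
  - destruct Na as [->|Hx]; [|exfalso; apply Hnm, Gmax_iff; eauto].
    exists (fun i => inr (v, length v + i)). split.
    + intros i j E. injection E. lia.
    + intro b. rewrite sons_root. split.
      * intros [h [-> Hh]]. exists (h - length v). do 2 f_equal. lia.
      * intros [i <-]. exists (length v + i). split; auto. lia.
  - destruct Na as [Hy Hh].
    set (P := fun n => (~ cone_in (y ++ [n]) /\ S (length y) <= h) \/
                       (cone_in (y ++ [n]) /\ level y n = h)).
    assert (Hinf : forall m, exists n, m <= n /\ P n).
    { intro m. destruct (level_onto y h m (proj1 Hy) Hh) as [n [H1 [H2 H3]]].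
      exists n. split; auto. right; auto. }
    set (son := fun n => if excluded_middle_informative (cone_in (y ++ [n]))
                         then inl (y ++ [n]) else inr (y ++ [n], h) : node).
    assert (Hson : forall n, P n -> sons Gtree (inr (y, h)) (son n)).
    { intros n Hn. apply sons_implant; auto. exists n. unfold son.
      destruct (excluded_middle_informative _); destruct Hn; tauto. }
    exists (fun i => son (nat_enum P i)). split.
    + intros i j E. apply (nat_enum_inj P Hinf).
      assert (Hlab : forall n, match son n with inl z => z | inr (z, _) => z end = y ++ [n])
        by (intro n; unfold son; destruct (excluded_middle_informative _); reflexivity).
      assert (H : y ++ [nat_enum P i] = y ++ [nat_enum P j])
        by (rewrite <- !Hlab, E; reflexivity).
      apply app_inj_tail in H. tauto.
    + intro b. split.
      * rewrite sons_implant by auto. intros [n Hn].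
        destruct (nat_enum_onto P Hinf n) as [i Hi]; [destruct Hn; [left|right]; tauto|].
        exists i. rewrite Hi. unfold son.
        destruct (excluded_middle_informative _); destruct Hn as [[-> [Hn _]]|[-> [Hn _]]]; tauto.
      * intros [i <-]. apply Hson, nat_enum_in, Hinf.
Qed.

Lemma G_bounded_chains : bounded_chains Gtree.
Proof.
  intros C [c0 Hc0] HCn Hch. simpl in *.
  destruct (classic (exists z, C (inl z) /\ z <> v)) as [[z [Hz Hzv]]|HnoM].
  - exists (inl z). split; auto. intros c Hc. destruct (Hch c (inl z) Hc Hz) as [H|[H|H]].
    + left; auto.
    + right; auto.
    + exfalso. apply Glt_from_inl in H. auto.
  - assert (Hform : forall c, C c -> c = inl v \/ exists y h, c = inr (y, h)).
    { intros [x|[y h]] Hc; eauto. left. destruct (classic (x = v)) as [->|Hne]; auto.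
      exfalso; eauto. }
    destruct (classic (exists y h, C (inr (y, h)))) as [[y0 [h0 Hc1]]|Hno].
    + assert (Hb : forall c, C c -> Grank c <= 2 * h0 + 3).
      { intros c Hc. destruct (HCn _ Hc1) as [Y0 L0].
        destruct (Hform c Hc) as [->|[y [h ->]]].
        - simpl. apply stem_length in Y0. lia.
        - destruct (HCn _ Hc) as [Y1 L1].
          destruct (Hch _ _ Hc Hc1) as [E|[[<- _]|[-> _]]]; simpl; [|lia|lia].
          injection E; intros; subst. lia. }
      destruct (chain_max_of_rank _ Glt Grank Grank_lt C (2 * h0 + 3) (ex_intro _ _ Hc1) Hb Hch)
        as [u [Hu Hmax]].
      exists u. split; [apply HCn; auto|]. intros c Hc. unfold tle. destruct (Hmax c Hc); auto.
    + exists (inl v). split; [left; auto|]. intros c Hc. left.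
      destruct (Hform c Hc) as [->|[y [h ->]]]; auto. exfalso; eauto.
Qed.

Lemma implant_leaf_Sleaf y h p : implant_leaf y h p -> Sleaf y p.
Proof.
  intros [y' [n [Hp [_ [_ [_ Hs]]]]]]. eapply prefix_Sleaf; [|eauto].
  eapply prefix_trans; [exact Hp | apply prefix_snoc_r].
Qed.

Lemma implant_leaf_O y h p : implant_leaf y h p -> O p.
Proof. intros [y' [n [_ [_ [Hs [_ Hl]]]]]]. auto. Qed.

Lemma Gleaf_root p : Gleaf (inl v) p <-> O p.
Proof. simpl. split; [intros [[_ ?]|[? _]]; [auto | congruence] | intro; left; auto]. Qed.

Lemma Gleaf_O a p : Gnode a -> Gleaf a p -> O p.
Proof.
  destruct a as [x|[y h]]; simpl.
  - intros [->|Hm] [[_ H]|[Hne H]]; auto; [congruence | eapply min_cone_sub; eauto].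
  - intros _. apply implant_leaf_O.
Qed.

Lemma Gleaf_snoc y n p : stem y -> (Gleaf (inl (y ++ [n])) p <-> Sleaf (y ++ [n]) p).
Proof.
  intro Hy. pose proof (stem_snoc_neq_root y n Hy). simpl.
  split; [intros [[E _]|[_ H']]; [contradiction | auto] | intro; right; auto].
Qed.

Lemma Gleaf_max z p : min_cone z -> (Gleaf (inl z) p <-> Sleaf z p).
Proof. intros [y [n [-> [Hy _]]]]. apply Gleaf_snoc; auto. Qed.

Lemma Gleaf_antitone a b p : Glt a b -> Gleaf b p -> Gleaf a p.
Proof.
  intros H Hl. pose proof (Glt_nodes _ _ H) as [_ Nb].
  destruct a as [x|[y h]].
  - apply Glt_from_inl in H as ->. left. split; auto. eapply Gleaf_O; eauto.
  - destruct b as [z|[y' h']].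
    + destruct H as [y' [n [-> [Hp [Hy [Hy' [Hs Hc]]]]]]].
      apply Gleaf_snoc in Hl; auto. exists y', n. split_ands; auto.
    + destruct H as [<- [_ [_ [_ [Hp _]]]]]. destruct Hl as [y'' [n [P Hr]]].
      exists y'', n. split; eauto using prefix_trans.
Qed.

Lemma G_locally_strict : locally_strict Gft.
Proof.
  intros a Na Hnm. simpl in *. destruct a as [x|[y h]].
  - destruct Na as [->|Hx]; [|exfalso; apply Hnm, Gmax_iff; eauto].
    split.
    + intro p. split.
      * intro Hp. apply Gleaf_root in Hp.
        destruct (min_cone_cover p Hp) as [z [[y' [n [-> [Hy' Hs]]]] Hz]].
        exists (inr (v, level y' n)). split.
        -- apply sons_root. eexists; split; eauto.
           pose proof (level_ge y' n). apply stem_length in Hy'. lia.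
        -- exists y', n. split_ands; auto. apply Hy'.
      * intros [s [Hs Hl]]. apply sons_root in Hs. destruct Hs as [h [-> _]].
        apply Gleaf_root. eapply implant_leaf_O; eauto.
    + intros s s' Hs Hs' Hne p Hl Hl'. apply sons_root in Hs. apply sons_root in Hs'.
      destruct Hs as [h [-> _]]. destruct Hs' as [h' [-> _]]. simpl in Hl, Hl'.
      destruct Hl as [y1 [n1 [_ [Y1 [S1 [C1 L1]]]]]].
      destruct Hl' as [y2 [n2 [_ [Y2 [S2 [C2 L2]]]]]].
      assert (E : y1 ++ [n1] = y2 ++ [n2]).
      { eapply min_cone_unique; eauto; [exists y1, n1 | exists y2, n2]; auto. }
      apply app_inj_tail in E. destruct E; subst. congruence.
  - destruct Na as [Hy Hh]. split.
    + intro p. split.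
      * intros [y' [n [Hp [Hy' [Hs [Hc Hl]]]]]].
        destruct (classic (y = y')) as [<-|Hne].
        -- exists (inl (y ++ [n])). split; [apply sons_implant; auto; exists n; right; auto|].
           apply Gleaf_snoc; auto.
        -- destruct (stem_next y y' Hy Hy' Hp Hne) as [m [w [-> Ym]]].
           exists (inr (y ++ [m], h)). split.
           ++ apply sons_implant; auto. exists m. left.
              split_ands; auto; [apply stem_not_in; auto|].
              pose proof (level_ge ((y ++ [m]) ++ w) n). rewrite !length_app in *. simpl in *. lia.
           ++ exists ((y ++ [m]) ++ w), n. split_ands; auto. exists w; auto.
      * intros [s [Hs Hl]]. apply sons_implant in Hs; auto.
        destruct Hs as [n [[-> _]|[-> [Hs Hc]]]].
        -- destruct Hl as [y' [n' [Hp Hr]]]. exists y', n'.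
           split; [eapply prefix_trans; [apply prefix_snoc_r | exact Hp] | auto].
        -- apply Gleaf_snoc in Hl; auto. exists y, n. split_ands; auto. apply prefix_refl.
    + intros s s' Hs Hs' Hne p Hl Hl'. apply sons_implant in Hs; auto.
      apply sons_implant in Hs'; auto.
      assert (Hsl : forall s n, (s = inr (y ++ [n], h) \/ s = inl (y ++ [n])) ->
                    Gleaf s p -> Sleaf (y ++ [n]) p).
      { intros s0 n0 [->| ->] H; [eapply implant_leaf_Sleaf; eauto | apply Gleaf_snoc in H; auto]. }
      destruct Hs as [n Hn]. destruct Hs' as [n' Hn'].
      assert (n = n').
      { assert (S1 : Sleaf (y ++ [n]) p)
          by (apply (Hsl s n); [destruct Hn as [[? _]|[? _]] | ]; auto).
        assert (S2 : Sleaf (y ++ [n']) p)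
          by (apply (Hsl s' n'); [destruct Hn' as [[? _]|[? _]] | ]; auto).
        apply Sleaf_snoc_last in S1. apply Sleaf_snoc_last in S2. congruence. }
      subst n'. destruct Hn as [[-> [N1 _]]|[-> [N1 _]]];
        destruct Hn' as [[-> [N2 _]]|[-> [N2 _]]]; tauto.
Qed.

Lemma G_open : open_ftree Gft.
Proof.
  assert (Hcone : forall z p, Sleaf z p ->
            exists N, forall q, (forall i, i < N -> q i = p i) -> Sleaf z q).
  { intros z p Hz. exists (length z). intros q Hq i Hi. rewrite Hq; auto. }
  intros a _ p Hp. simpl in *. destruct a as [x|[y h]].
  - destruct Hp as [[-> Op]|[Hne Hs]].
    + destruct (O_open p Op) as [N HN]. exists N. intros q Hq. left; auto.
    + destruct (Hcone x p Hs) as [N HN]. exists N. intros q Hq. right; auto.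
  - destruct Hp as [y' [n [A [B [C [D E]]]]]]. destruct (Hcone _ _ E) as [N HN].
    exists N. intros q Hq. exists y', n. split_ands; auto.
Qed.

Lemma refines_implant y h : stem y -> length y <= h ->
  refines (shoot Gft (inr (y, h))) (shoot (S_ftree (list nat * nat)) (inl y)).
Proof.
  intros Hy Hh D [C [HC1 [[l Hl] HD]]] _.
  set (C' := fun s => sons Gtree (inr (y, h)) s /\
                      exists n, (s = inr (y ++ [n], h) \/ s = inl (y ++ [n])) /\
                                C (inl (y ++ [n]))).
  exists (fun p => exists s, C' s /\ Gleaf s p). split; [|split].
  - exists C'. split; [|split].
    + intros s Hs. apply Hs.
    + exists (flat_map (fun b : node =>
                match b with inl a => [inr (a, h); inl a] | inr _ => [] end) l).
      intros s [Hs HnC]. pose proof Hs as Hs'. apply sons_implant in Hs'; auto.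
      destruct Hs' as [n Hn].
      assert (Hs2 : s = inr (y ++ [n], h) \/ s = inl (y ++ [n]))
        by (destruct Hn as [[? _]|[? _]]; auto).
      assert (Hin : In (inl (y ++ [n]) : node) l).
      { apply Hl. split; [apply sons_S_tree; eauto|]. intro Hc. apply HnC. split; eauto. }
      apply in_flat_map. exists (inl (y ++ [n])). split; auto.
      simpl. destruct Hs2 as [->| ->]; auto.
    + intro p. reflexivity.
  - (* The finitely many sons of y excluded from C are bounded in their last digit;
       a son beyond the bound at level h then lies in C'. *)
    set (digit := fun b : node => match b with inl a => S (nth (length y) a 0) | inr _ => 0 end).
    destruct (level_onto y h (list_sum (map digit l)) (proj1 Hy) Hh) as [n [Hn1 [Hn2 Hn3]]].
    assert (HCn : C (inl (y ++ [n]))).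
    { destruct (classic (C (inl (y ++ [n])))) as [|Hc]; auto. exfalso.
      assert (Hin : In (inl (y ++ [n]) : node) l)
        by (apply Hl; split; [apply sons_S_tree; eauto | auto]).
      apply (In_le_list_sum digit) in Hin. simpl in Hin. rewrite nth_middle in Hin. lia. }
    exists (zero_ext (y ++ [n])). exists (inl (y ++ [n])). split.
    + split; [apply sons_implant; auto; exists n; right; auto|]. exists n. split; auto.
    + apply Gleaf_snoc; auto. apply Sleaf_zero_ext.
  - intros p [s [[_ [n [Hs HCs]]] Hl']]. apply HD. exists (inl (y ++ [n])). split; auto. simpl.
    destruct Hs as [->| ->]; [eapply implant_leaf_Sleaf; eauto | apply Gleaf_snoc in Hl'; auto].
Qed.

Lemma G_preserves_shoots : preserves_shoots (S_ftree (list nat * nat)) Gft (inl v).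
Proof.
  intros p [x0 [Nx0 Lx0]] yS [NyS Hsl] Hcase.
  assert (Op : O p) by exact (Gleaf_O x0 p Nx0 Lx0).
  destruct yS as [y'|]; [|destruct NyS]. simpl in Hsl.
  assert (Yy : stem y').
  { destruct Hcase as [E|[Hlt Hno]]; [injection E as ->; apply stem_root|].
    simpl in Hlt. apply strict_prefix_iff in Hlt. destruct Hlt as [Pv _].
    split; auto. intros w Hw1 Hw2 Hw. destruct (min_cone_below w Hw1 Hw) as [z [Hz Pz]].
    apply Hno. exists (inl z). split; [apply Gmax_iff; eauto|].
    destruct (classic (z = y')) as [->|Hne]; [left; auto|].
    right. simpl. apply strict_prefix_iff. split; eauto using prefix_trans. }
  destruct (min_cone_cover p Op) as [z [Hz Sz]].
  pose proof Hz as [y'' [n [-> [Hy'' Hs]]]].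
  assert (Pyz : prefix y' y'').
  { destruct (Sleaf_comparable _ _ _ Hsl Sz) as [P|P].
    - destruct (prefix_snoc _ _ _ P) as [P'| ->]; auto.
      exfalso. exact (min_cone_not_prefix_stem _ _ Hz Yy P).
    - exfalso. exact (min_cone_not_prefix_stem _ _ Hz Yy P). }
  set (h := level y'' n).
  assert (Hh : length y' <= h)
    by (pose proof (level_ge y'' n); apply prefix_length in Pyz; unfold h; lia).
  exists (inr (y', h)). split; [|split].
  - split; [split; auto|]. exists y'', n. split_ands; auto.
  - right. split; [split; auto|]. split; [congruence|]. apply implant_not_max. split; auto.
  - apply refines_implant; auto.
Qed.

Lemma G_root : is_root Gtree (inl v).
Proof. split; [left; reflexivity|]. intros y Ny Hne. simpl. auto. Qed.

Lemma G_height : height_le_omega Gtree.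
Proof.
  exists None. intros x _. apply not_order_type_omega_of_rank with (rk := Grank), Grank_lt.
Qed.

Lemma G_implant_exists : exists x, impl Gtree (inl v) x.
Proof.
  exists (inr (v, length v)).
  assert (Nx : Gnode (inr (v, length v))) by (split; [apply stem_root | auto]).
  split; [exact Nx | split; [congruence | apply implant_not_max, Nx]].
Qed.

Lemma G_max_leaf m p : is_max Gtree m -> Gleaf m p <-> leaf (S_ftree (list nat * nat)) m p.
Proof. intro Hm. apply Gmax_iff in Hm as [z [-> Hz]]. apply Gleaf_max, Hz. Qed.

Lemma G_max_disjoint m m' p : is_max Gtree m -> is_max Gtree m' ->
  leaf (S_ftree (list nat * nat)) m p -> leaf (S_ftree (list nat * nat)) m' p -> m = m'.
Proof.
  intros Hm Hm'. apply Gmax_iff in Hm as [z [-> Hz]]. apply Gmax_iff in Hm' as [z' [-> Hz']].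
  simpl. intros H H'. f_equal. exact (min_cone_unique z z' p Hz Hz' H H').
Qed.

Lemma G_max_cover p : O p <-> exists m, is_max Gtree m /\ leaf (S_ftree (list nat * nat)) m p.
Proof.
  split.
  - intro Op. destruct (min_cone_cover p Op) as [z [Hz Sz]].
    exists (inl z). split; [apply Gmax_iff; eauto | exact Sz].
  - intros [m [Hm Hl]]. apply Gmax_iff in Hm as [z [-> Hz]]. exact (min_cone_sub z p Hz Hl).
Qed.

Lemma G_is_graft : is_graft (S_tree (list nat * nat)) Gtree (inl v).
Proof.
  unfold is_graft. split_ands; [apply S_is_tree | apply G_is_tree | | apply G_root | exact I | | |].
  - exists (inl v), (inr (v, length v)). split_ands; [left | split; [apply stem_root|] | ];
      auto; congruence.
  - intros m Hm. apply Gmax_iff in Hm as [z [-> Hz]]. split; [exact I|].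
    apply strict_prefix_iff. split; [apply min_cone_prefix, Hz|].
    intro E. exact (min_cone_neq_root z Hz (eq_sym E)).
  - intros m m' Hm Hm' Hne H. apply Hne.
    pose proof Hm as [z [-> _]] %Gmax_iff. pose proof Hm' as [z' [-> _]] %Gmax_iff.
    apply strict_prefix_iff in H as [P _].
    apply (G_max_disjoint _ _ (zero_ext z') Hm Hm'); simpl;
      [eapply prefix_Sleaf; eauto|]; apply Sleaf_zero_ext.
  - intros [x|[y h]] [Nx [Hne Hnm]]; simpl; auto.
    intros _. destruct Nx as [->|Hx]; [congruence|]. apply Hnm, Gmax_iff; eauto.
Qed.

Lemma G_foliage_graft : foliage_graft (S_ftree (list nat * nat)) Gft (inl v).
Proof.
  unfold foliage_graft. split_ands.
  - intros [x|] [y|]; simpl; try tauto. intros _ _ [E|E] p H; [injection E as ->; auto|].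
    apply strict_prefix_iff in E. exact (prefix_Sleaf _ _ _ (proj1 E) H).
  - intros x y _ _ [<-|E] p H; [auto | exact (Gleaf_antitone x y p E H)].
  - apply G_is_graft.
  - intros p H. apply O_sub, Gleaf_root, H.
  - intros m Hm p. apply G_max_leaf, Hm.
Qed.

End Graft.

Theorem mainTheorem14 (v : list nat) (O : pset)
  (HOsub : forall p, O p -> Sleaf v p)
  (HOne : exists p, Sleaf v p /\ ~ O p)
  (HOopen : open_set O)
  (HOdense : pi_dense O v) :
  exists (I : Type) (G : ftree (list nat + I)),
    is_root (skel G) (inl v) /\
    height_le_omega (skel G) /\
    aleph0_branching (skel G) /\
    bounded_chains (skel G) /\
    locally_strict G /\
    open_ftree G /\
    foliage_graft (S_ftree I) G (inl v) /\
    preserves_shoots (S_ftree I) G (inl v) /\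
    (exists x, impl (skel G) (inl v) x) /\
    (forall p, (Sleaf v p /\ ~ leaf G (inl v) p) <-> (Sleaf v p /\ ~ O p)) /\
    (forall p, O p <-> exists z, is_max (skel G) z /\ leaf (S_ftree I) z p) /\
    (forall z z', is_max (skel G) z -> is_max (skel G) z' -> z <> z' ->
       forall p, leaf (S_ftree I) z p -> leaf (S_ftree I) z' p -> False).
Proof.
  assert (Hv : ~ cone_in O v).
  { intro H. destruct HOne as [p [H1 H2]]. apply H2, H, H1. }
  exists (list nat * nat)%type, (Gft v O). simpl.
  split_ands.
  - apply G_root.
  - apply G_height.
  - apply G_aleph0_branching; auto.
  - apply G_bounded_chains.
  - apply G_locally_strict; auto.
  - apply G_open; auto.
  - apply G_foliage_graft; auto.
  - apply G_preserves_shoots; auto.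
  - apply G_implant_exists; auto.
  - intro p. pose proof (Gleaf_root v O p). tauto.
  - apply G_max_cover; auto.
  - intros m m' Hm Hm' Hne p H H'. exact (Hne (G_max_disjoint v O Hv HOdense m m' p Hm Hm' H H')).
Qed.
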